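(* Let $H$ be a graph with vertex set $A\cup\{v\}$, where $v\notin A$, $A$ is a clique, and $v$ has both a neighbour and a non-neighbour in $A$. Let $F$ be a spanning subgraph of $H$ obtained by removing some (possibly all) edges incident to $v$. Then $H\xrightarrow{\cap} F$.
   Context: All graphs are finite and simple. For graphs $G_1=(V_1,E_1)$, $G_2=(V_2,E_2)$, $G_1\cap G_2=(V_1\cap V_2, E_1\cap E_2)$. For a graph $G=(V,E)$ and an injective map $\alpha$ on $V$, $G^{\alpha}$ has vertex set $\alpha(V)$ and edge set $\{\{\alpha(v),\alpha(w)\}: \{v,w\}\in E\}$. We write $G\xrightarrow{\cap} H$ if $H=G^{\alpha_1}\cap\cdots\cap G^{\alpha_k}$ for some $k\ge1$ and injective maps $\alpha_1,\dots,\alpha_k$ on $V(G)$. *)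

From mathcomp Require Import all_boot.
From Stdlib Require Lists.List.
Set Implicit Arguments. Unset Strict Implicit. Unset Printing Implicit Defensive.

Record graph (T : finType) := Graph { gV : {set T}; gE : {set {set T}} }.

Definition simple_graph (T : finType) (G : graph T) : Prop :=
  forall e, e \in gE G -> (e \subset gV G) /\ #|e| = 2.

Definition gcap (T : finType) (G1 G2 : graph T) : graph T :=
  Graph (gV G1 :&: gV G2) (gE G1 :&: gE G2).

Definition gimg (T : finType) (a : T -> T) (G : graph T) : graph T :=
  Graph (a @: gV G) [set a @: e | e : {set T} in gE G].

(* G -->∩ H : H = G^{a_1} ∩ ... ∩ G^{a_k}, k >= 1, each a_i injective on V(G).
   The maps are given as a0 :: s. *)
Definition cap_arrow (T : finType) (G H : graph T) : Prop :=
  exists (a0 : T -> T) (s : seq (T -> T)),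
    (forall a, Stdlib.Lists.List.In a (a0 :: s) -> {in gV G &, injective a}) /\
    H = foldr (fun a acc => gcap (gimg a G) acc) (gimg a0 G) s.

From mathcomp Require Import all_boot fingroup perm.
Set Implicit Arguments. Unset Strict Implicit. Unset Printing Implicit Defensive.

(* Let m be a non-neighbour of v in A.  For every x in A such that vx is not
   an edge of F, the transposition (m x) fixes v and A setwise; it maps an
   edge of F to an edge of H (a clique edge to a clique edge, and an edge vq
   of F to itself since q is neither x nor m), while it maps vx onto the
   non-edge vm.  Hence F is the intersection of H with its images under all
   these transpositions. *)

Section PermImages.

Variable T : finType.
Local Open Scope group_scope.

Lemma imset_permK (p : {perm T}) :
  cancel (fun e : {set T} => p @: e) (fun e => p^-1 @: e).
Proof. by move=> e; rewrite -imset_comp (eq_imset _ (permK p)) imset_id. Qed.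

Lemma gimg_permV (p : {perm T}) (G : graph T) y :
  (y \in gV (gimg p G)) = (p^-1 y \in gV G).
Proof. by rewrite /= (can2_imset_pre _ (permK p) (permKV p)) inE. Qed.

Lemma gimg_permE (p : {perm T}) (G : graph T) e :
  (e \in gE (gimg p G)) = (p^-1 @: e \in gE G).
Proof.
have pK := imset_permK p; have pKV := imset_permK p^-1; rewrite invgK in pKV.
by rewrite /= (can2_imset_pre _ pK pKV) inE.
Qed.

Lemma graph_ext (G1 G2 : graph T) : gV G1 = gV G2 -> gE G1 = gE G2 -> G1 = G2.
Proof. by case: G1 G2 => ? ? [? ?] /= -> ->. Qed.

Definition cap_images (G : graph T) (a0 : T -> T) (s : seq (T -> T)) :=
  foldr (fun a acc => gcap (gimg a G) acc) (gimg a0 G) s.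

Lemma cap_imagesV G a0 s y :
  (y \in gV (cap_images G a0 s)) = all (fun a => y \in gV (gimg a G)) (a0 :: s).
Proof. by elim: s => [|a s IH] /=; rewrite ?andbT // in_setI IH andbCA. Qed.

Lemma cap_imagesE G a0 s e :
  (e \in gE (cap_images G a0 s)) = all (fun a => e \in gE (gimg a G)) (a0 :: s).
Proof. by elim: s => [|a s IH] /=; rewrite ?andbT // in_setI IH andbCA. Qed.

Lemma cap_arrow_perms (G H : graph T) (s : seq {perm T}) :
  (forall y, (y \in gV H) =
     (y \in gV G) && all (fun p : {perm T} => p^-1 y \in gV G) s) ->
  (forall e, (e \in gE H) =
     (e \in gE G) && all (fun p : {perm T} => p^-1 @: e \in gE G) s) ->
  cap_arrow G H.
Proof.
move=> HV HE; exists id, [seq fun_of_perm p | p <- s]; split.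
  move=> a [<- //|/List.in_map_iff [p [<- _]]]; exact: in2W perm_inj.
apply: graph_ext; apply/setP.
  move=> y; rewrite (cap_imagesV G id) /= all_map /= imset_id HV.
  by congr (_ && _); apply: eq_all => p; rewrite /= gimg_permV.
move=> e; rewrite (cap_imagesE G id) /= all_map /= HE.
rewrite (eq_imset _ (@imset_id T)) imset_id.
by congr (_ && _); apply: eq_all => p; rewrite /= gimg_permE.
Qed.

End PermImages.

Section CliqueWithApex.

Variables (T : finType) (H F : graph T) (A : {set T}) (v m : T).
Hypotheses (simpleH : simple_graph H) (vNA : v \notin A) (VH : gV H = v |: A).
Hypothesis cliqueA :
  forall x y, x \in A -> y \in A -> x != y -> [set x; y] \in gE H.
Hypotheses (mA : m \in A) (vmNH : [set v; m] \notin gE H).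
Hypotheses (VF : gV F = gV H) (EFH : gE F \subset gE H).
Hypothesis apex_in_removed : forall e, e \in gE H -> e \notin gE F -> v \in e.

Definition apex_lost := [set x in A | [set v; x] \notin gE F].

Lemma apex_neq x : x \in A -> v != x.
Proof. by apply: contraTneq => <-. Qed.

Lemma tperm_apex x : x \in A -> tperm m x v = v.
Proof. by move=> xA; rewrite tpermD // eq_sym apex_neq. Qed.

Lemma tperm_clique x y : x \in A -> (tperm m x y \in A) = (y \in A).
Proof. by move=> xA; case: tpermP => [->|->|//]; rewrite ?mA ?xA. Qed.

Lemma tperm_vertex x y : x \in A -> (tperm m x y \in gV H) = (y \in gV H).
Proof.
move=> xA; rewrite VH !inE tperm_clique //.
by rewrite -{1}(tperm_apex xA) (inj_eq perm_inj).
Qed.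

Lemma clique_edge (e : {set T}) : e \subset A -> #|e| = 2 -> e \in gE H.
Proof.
move=> eA /eqP/cards2P [x [y [xy exy]]]; rewrite exy in eA *.
by apply: cliqueA => //; apply: (subsetP eA); rewrite !inE eqxx ?orbT.
Qed.

Lemma apex_edge (e : {set T}) :
  e \in gE H -> v \in e -> exists2 q, q \in A & e = [set v; q].
Proof.
move=> eH ve; have [eV e2] := simpleH eH.
have /cards1P [q eq] : #|e :\ v| == 1.
  by move: e2; rewrite (cardsD1 v) ve add1n => -[->].
have : q \in e :\ v by rewrite eq set11.
rewrite !inE => /andP [qv qe]; exists q; last by rewrite -eq setD1K.
by have := subsetP eV q qe; rewrite VH !inE (negbTE qv).
Qed.

Lemma tperm_edge x (e : {set T}) :
  x \in apex_lost -> e \in gE F -> tperm m x @: e \in gE H.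
Proof.
rewrite inE => /andP [xA vxNF] eF; have eH := subsetP EFH e eF.
have [eV e2] := simpleH eH.
have [ve|vNe] := boolP (v \in e).
  have [q qA eq] := apex_edge eH ve.
  suff /eq_in_imset-> : {in e, tperm m x =1 id} by rewrite imset_id.
  move=> y; rewrite eq !inE => /orP [/eqP ->|/eqP ->]; first exact: tperm_apex.
  rewrite tpermD //.
    by apply: contraNneq vmNH => ->; rewrite -eq.
  by apply: contraNneq vxNF => ->; rewrite -eq.
apply: clique_edge; last by rewrite (card_imset _ perm_inj).
apply/subsetP => _ /imsetP [y ye ->]; rewrite tperm_clique //.
have := subsetP eV y ye; rewrite VH !inE => /orP [/eqP vy|//].
by rewrite -vy ye in vNe.
Qed.

Lemma tperm_removed_edge (e : {set T}) : e \in gE H -> e \notin gE F ->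
  exists2 x, x \in apex_lost & tperm m x @: e \notin gE H.
Proof.
move=> eH eNF; have [q qA eq] := apex_edge eH (apex_in_removed eH eNF).
exists q; first by rewrite inE qA -eq eNF.
by rewrite eq imsetU1 imset_set1 tperm_apex // tpermR.
Qed.

Lemma cap_arrow_apex : cap_arrow H F.
Proof.
apply: (@cap_arrow_perms _ _ _ [seq tperm m x | x <- enum apex_lost]).
  move=> y; rewrite all_map VF; case: (boolP (y \in gV H)) => //= yH.
  apply/esym/allP => x; rewrite mem_enum inE => /andP [xA _] /=.
  by rewrite tpermV tperm_vertex.
move=> e; rewrite all_map; apply/idP/andP => [eF|[eH /allP Ee]].
  split; first exact: (subsetP EFH).
  by apply/allP => x; rewrite mem_enum /= tpermV => xL; apply: tperm_edge.
apply/negPn/negP => eNF; have [x xL] := tperm_removed_edge eH eNF.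
by move/negP; apply; have := Ee x; rewrite mem_enum /= tpermV; apply.
Qed.

End CliqueWithApex.

Theorem mainTheorem10 (T : finType) (H F : graph T) (A : {set T}) (v : T) :
  simple_graph H ->
  v \notin A ->
  gV H = v |: A ->
  (forall x y, x \in A -> y \in A -> x != y -> [set x; y] \in gE H) ->
  (exists2 a, a \in A & [set v; a] \in gE H) ->
  (exists2 a, a \in A & [set v; a] \notin gE H) ->
  gV F = gV H ->
  gE F \subset gE H ->
  (forall e, e \in gE H -> e \notin gE F -> v \in e) ->
  cap_arrow H F.
Proof.
move=> simpleH vNA VH cliqueA _ [m mA vmNH] VF EFH removed.
exact: (cap_arrow_apex simpleH vNA VH cliqueA mA vmNH VF EFH removed).
Qed.
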